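(* Let $\omega(n)\to+\infty$. If $p=p(n)$ satisfies \[2\frac{\log(n)+\omega(n)}{n}\le p\le 1-\frac{\log(n)+\log(\log(n))+\omega(n)}{n},\] then the probability that $\Gamma\in G(n,p)$ has a non-adjacent domination pair tends to $0$ as $n\to\infty$.
   Context: $G(n,p)$ is the Erdős–Rényi random graph on $n$ vertices with each edge present independently with probability $p$; $\log$ is the natural logarithm. For distinct vertices $a,b$, $a$ dominates $b$ if every vertex adjacent to $b$ is adjacent to or equal to $a$; the pair is non-adjacent if $a$ and $b$ are not adjacent. *)

From HB Require Import structures.
From mathcomp Require Import all_boot all_order all_algebra.
From mathcomp Require Import all_classical all_reals all_analysis.
Set Implicit Arguments. Unset Strict Implicit. Unset Printing Implicit Defensive.
Import Order.TTheory GRing.Theory Num.Theory.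
Local Open Scope ring_scope.

(* A simple graph on vertex set 'I_n is given by its edge set E, a set of
   2-element subsets of 'I_n. *)
Definition pairs (n : nat) : {set {set 'I_n}} := [set e : {set 'I_n} | #|e| == 2%N].

Definition is_graph (n : nat) (E : {set {set 'I_n}}) : bool := E \subset pairs n.

Definition adj (n : nat) (E : {set {set 'I_n}}) (a b : 'I_n) : bool :=
  (a != b) && ([set a; b] \in E).

Definition dominates (n : nat) (E : {set {set 'I_n}}) (a b : 'I_n) : bool :=
  [forall v, adj E v b ==> (adj E v a || (v == a))].

Definition has_nonadj_dom_pair (n : nat) (E : {set {set 'I_n}}) : bool :=
  [exists a, exists b, [&& a != b, ~~ adj E a b & dominates E a b]].

Definition gnp_weight (R : realType) (n : nat) (p : R) (E : {set {set 'I_n}}) : R :=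
  p ^+ #|E| * (1 - p) ^+ ('C(n, 2) - #|E|).

Definition gnp_prob (R : realType) (n : nat) (p : R) (P : {set {set 'I_n}} -> bool) : R :=
  \sum_(E : {set {set 'I_n}} | is_graph E && P E) gnp_weight p E.

(* Distinct a, b form a non-adjacent domination pair iff ab is a non-edge and no
   vertex v is adjacent to b but not to a.  These conditions involve pairwise
   disjoint sets of edges, so (by inclusion-exclusion over the set of vertices
   v violating the second condition) the pair has probability exactly
   (1 - p) (1 - p (1 - p))^(n - 2), and the union bound over ordered pairs gives
   at most n^2 (1 - p) exp(-(n - 2) p (1 - p)).  When p <= 1/2 the lower bound
   on p makes this O(e^(-2 t)); when p >= 1/2 the upper bound, i.e.
   n (1 - p) >= log n + log log n + t, makes it O(e^(-t)), the log log n term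
   paying for the factor n (1 - p).  Here t = min(omega(n), log log n) -> +oo. *)

From HB Require Import structures.
From mathcomp Require Import all_boot all_order all_algebra.
From mathcomp Require Import all_classical all_reals all_analysis.
From mathcomp Require Import ring lra.
Set Implicit Arguments.
Unset Strict Implicit.
Unset Printing Implicit Defensive.

Import Order.TTheory GRing.Theory Num.Theory.
Import numFieldNormedType.Exports.
Local Open Scope ring_scope.

Lemma prodr1B_subsets (R : comPzRingType) (I : finType) (S : {set I}) (x : I -> R) :
  \prod_(i in S) (1 - x i) = \sum_(J : {set I} | J \subset S) (-1) ^+ #|J| * \prod_(i in J) x i.
Proof.
rewrite big_mkcond /=.
have -> : \prod_i (if i \in S then 1 - x i else 1) =
          \prod_i ((if i \in S then - x i else 0) + 1).
  by apply: eq_bigr => i _; case: (i \in S); rewrite ?add0r // addrC.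
rewrite bigA_distr [RHS]big_mkcond /=; apply: eq_bigr => J _.
case: ifP => [/fintype.subsetP JS | /negbT /fintype.subsetPn [i iJ /negbTE niS]].
  rewrite -prodrN [RHS]big_mkcond /=; apply: eq_bigr => i _.
  by case: (boolP (i \in J)) => [/JS -> | _].
by rewrite (bigD1 i) //= iJ niS mul0r.
Qed.

Lemma prodr_natb (R : comPzSemiRingType) (I : finType) (A : {pred I}) (P : pred I) :
  \prod_(i in A) ((P i)%:R : R) = [forall i in A, P i]%:R.
Proof.
case: (boolP [forall i in A, P i]) => [/forall_inP PA | ].
  by rewrite big1 // => i /PA ->.
rewrite negb_forall_in => /exists_inP [i iA /negbTE Pi].
by rewrite (bigD1 i iA) /= Pi mul0r.
Qed.

Lemma prodr_if_const (R : comPzSemiRingType) (I : finType) (A B : {set I}) (x : R) :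
  B \subset A -> \prod_(i in A) (if i \in B then x else 1) = x ^+ #|B|.
Proof.
move=> /fintype.subsetP BA; rewrite -big_mkcondr -prodr_const.
by apply: eq_bigl => i; rewrite andb_idl // => /BA.
Qed.

Section Gnp.
Variables (R : realType) (n : nat) (p : R).
Implicit Types (E : {set {set 'I_n}}) (P : {set {set 'I_n}} -> bool).

Lemma gnp_probE P : gnp_prob p P = \sum_(E | is_graph E) gnp_weight p E * (P E)%:R.
Proof. by rewrite /gnp_prob big_mkcondr; apply: eq_bigr => E _; case: (P E); rewrite ?mulr1 ?mulr0. Qed.

Lemma card_pairs : #|pairs n| = 'C(n, 2).
Proof. by rewrite card_draws card_ord. Qed.

Lemma gnp_weightE E : is_graph E ->
  gnp_weight p E = \prod_(e in pairs n) (if e \in E then p else 1 - p).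
Proof.
move=> Epairs; have pairsIE : pairs n :&: E = E by apply/finset.setIidPr.
rewrite (big_setID E) /= pairsIE.
rewrite (eq_bigr (fun=> p)) => [|e]; last by move=> ->.
rewrite [X in _ * X](eq_bigr (fun=> 1 - p)) => [|e]; last by rewrite !inE => /andP [/negbTE ->].
by rewrite !prodr_const cardsD pairsIE card_pairs.
Qed.

Lemma gnp_sum_prod (g : {set 'I_n} -> bool -> R) :
  \sum_(E | is_graph E) gnp_weight p E * \prod_(e in pairs n) g e (e \in E) =
  \prod_(e in pairs n) (p * g e true + (1 - p) * g e false).
Proof.
pose F1 e := if e \in pairs n then p * g e true else 0.
pose F2 e := if e \in pairs n then (1 - p) * g e false else 1.
have -> : \prod_(e in pairs n) (p * g e true + (1 - p) * g e false) = \prod_e (F1 e + F2 e).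
  by rewrite big_mkcond; apply: eq_bigr => e _; rewrite /F1 /F2; case: ifP; rewrite ?add0r.
rewrite bigA_distr big_mkcond; apply: eq_bigr => E _.
case: ifP => [Epairs | /negbT /fintype.subsetPn [e eE /negbTE epairs]]; last first.
  by rewrite (bigD1 e) //= eE /F1 epairs mul0r.
rewrite gnp_weightE // -big_split /= big_mkcond /=; apply: eq_bigr => e _.
rewrite /F1 /F2; case: (boolP (e \in pairs n)) => [_ | epairs]; last first.
  by case: ifP => // /(fintype.subsetP Epairs); rewrite (negbTE epairs).
by case: (e \in E).
Qed.

Lemma gnp_prob_pattern (Y N : {set {set 'I_n}}) :
  Y \subset pairs n -> N \subset pairs n -> [disjoint Y & N] ->
  gnp_prob p (fun E => (Y \subset E) && [disjoint N & E]) = p ^+ #|Y| * (1 - p) ^+ #|N|.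
Proof.
move=> Ypairs Npairs YN.
pose g (e : {set 'I_n}) (b : bool) : R := (((e \in Y) ==> b) && ((e \in N) ==> ~~ b))%:R.
transitivity (\sum_(E | is_graph E) gnp_weight p E * \prod_(e in pairs n) g e (e \in E)).
  rewrite gnp_probE; apply: eq_bigr => E _; congr (_ * _).
  rewrite prodr_natb finset.disjoints_subset; congr ((nat_of_bool _)%:R).
  apply/idP/idP => [/andP [/fintype.subsetP YE /fintype.subsetP NE] | /forall_inP g1].
    by apply/forall_inP => e _; apply/andP; split; apply/implyP; [move/YE | move/NE; rewrite inE].
  apply/andP; split; apply/fintype.subsetP => e eYN.
  - by have /andP [/implyP -> //] := g1 e (fintype.subsetP Ypairs e eYN).
  - by have /andP [_ /implyP] := g1 e (fintype.subsetP Npairs e eYN); rewrite inE; apply.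
rewrite gnp_sum_prod -(prodr_if_const p Ypairs) -(prodr_if_const (1 - p) Npairs) -big_split /=.
apply: eq_bigr => e _; rewrite /g; case: (boolP (e \in Y)) => [eY | _].
  by rewrite (disjointFr YN eY) /= mulr1 mulr0 addr0.
by case: (e \in N); rewrite /= ?mulr1 ?mulr0 ?add0r ?mul1r // addrC subrK.
Qed.

Hypothesis p01 : 0 <= p <= 1.

Lemma gnp_weight_ge0 E : 0 <= gnp_weight p E.
Proof. by case/andP: p01 => p0 p1; rewrite mulr_ge0 ?exprn_ge0 ?subr_ge0. Qed.

Lemma gnp_prob_ge0 P : 0 <= gnp_prob p P.
Proof. exact/sumr_ge0/(fun E _ => gnp_weight_ge0 E). Qed.

Lemma gnp_prob_exists_le (I : finType) (P : I -> {set {set 'I_n}} -> bool) :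
  gnp_prob p (fun E => [exists i, P i E]) <= \sum_i gnp_prob p (P i).
Proof.
rewrite gnp_probE (eq_bigr _ (fun i _ => gnp_probE (P i))) exchange_big /=.
apply: ler_sum => E _; rewrite -big_distrr; apply: ler_wpM2l; first exact: gnp_weight_ge0.
have sum_ge0 (A : pred I) : 0 <= \sum_(i | A i) ((P i E)%:R : R).
  by apply: sumr_ge0 => i _; case: (P i E).
case: (boolP [exists i, P i E]) => [/existsP [i Pi] | _]; last exact: sum_ge0.
by rewrite (bigD1 i) //= Pi lerDl sum_ge0.
Qed.

End Gnp.

Lemma pairs_set2 (n : nat) (x y : 'I_n) : ([set x; y] \in pairs n) = (x != y).
Proof. by rewrite inE cards2; case: (x != y). Qed.

Section Domination.
Variables (R : realType) (n : nat) (p : R) (a b : 'I_n).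
Hypothesis ab : a != b.
Implicit Types (E : {set {set 'I_n}}) (J : {set 'I_n}).

Lemma nonadj_dominatesE E :
  ~~ adj E a b && dominates E a b =
  ([set a; b] \notin E) && [forall v in ~: [set a; b], ([set v; b] \in E) ==> ([set v; a] \in E)].
Proof.
rewrite /adj ab /=; apply: andb_id2l => abE.
apply/forallP/forall_inP => [dom v | dom v].
  rewrite !inE negb_or => /andP [va vb]; apply/implyP => vbE.
  by have := implyP (dom v); rewrite /adj (negbTE va) vb vbE /= orbF; apply.
apply/implyP; rewrite /adj => /andP [vb vbE].
case: (eqVneq v a) => [_ | va]; first by rewrite orbT.
by rewrite orbF (implyP (dom v _)) // !inE negb_or va.
Qed.

(* The edges and non-edges forced by the non-edge ab together with every v in J
   witnessing that a does not dominate b (vb an edge, va not). *)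
Definition witness_edges J : {set {set 'I_n}} := [set [set v; b] | v in J].
Definition witness_nonedges J : {set {set 'I_n}} := [set a; b] |: [set [set v; a] | v in J].

Lemma witnessesE J E :
  ([set a; b] \notin E) && [forall v in J, ([set v; b] \in E) && ([set v; a] \notin E)] =
  (witness_edges J \subset E) && [disjoint witness_nonedges J & E].
Proof.
rewrite finset.disjoints_subset finset.subUset finset.sub1set !sub_imset_pre inE andbCA; congr (_ && _).
apply/forall_inP/andP => [wit | [/fintype.subsetP WE /fintype.subsetP WN] v vJ].
  by split; apply/fintype.subsetP => v /wit /andP [vbE vaE]; rewrite !inE ?vbE.
by have := WE v vJ; have := WN v vJ; rewrite !inE => -> ->.
Qed.

Section Witnesses.
Variable J : {set 'I_n}.
Hypothesis J_ab : J \subset ~: [set a; b].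

Let J_neq v : v \in J -> (v != a) && (v != b).
Proof. by move=> /(fintype.subsetP J_ab); rewrite !inE negb_or. Qed.

Lemma witness_edges_pairs : witness_edges J \subset pairs n.
Proof. by apply/fintype.subsetP => _ /imsetP [v /J_neq /andP [_ vb] ->]; rewrite pairs_set2. Qed.

Lemma witness_nonedges_pairs : witness_nonedges J \subset pairs n.
Proof.
apply/fintype.subsetP => e /setU1P [-> | /imsetP [v /J_neq /andP [va _] ->]];
  by rewrite pairs_set2.
Qed.

Lemma disjoint_witness_edges_nonedges : [disjoint witness_edges J & witness_nonedges J].
Proof.
apply/pred0P => e /=; apply/negbTE/negP => /andP [/imsetP [v /J_neq /andP [va vb] ->]].
case/setU1P => [vb_ab | /imsetP [w /J_neq /andP [wa wb] vb_wa]].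
  by have := set21 v b; rewrite vb_ab !inE (negbTE va) (negbTE vb).
by have := set22 v b; rewrite vb_wa !inE [b == w]eq_sym [b == a]eq_sym (negbTE wb) (negbTE ab).
Qed.

Lemma card_witness_edges : #|witness_edges J| = #|J|.
Proof.
apply: card_in_imset => v w /J_neq /andP [_ vb] _ vw.
by have := set21 v b; rewrite vw !inE (negbTE vb) orbF => /eqP.
Qed.

Lemma card_witness_nonedges : #|witness_nonedges J| = #|J|.+1.
Proof.
have ab_notin : [set a; b] \notin [set [set v; a] | v in J].
  apply/imsetP => -[v /J_neq /andP [_ vb] abv].
  by have := set22 a b; rewrite abv !inE [b == v]eq_sym [b == a]eq_sym (negbTE vb) (negbTE ab).
rewrite cardsU1 ab_notin add1n; congr _.+1.
apply: card_in_imset => v w /J_neq /andP [va _] _ vw.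
by have := set21 v a; rewrite vw !inE (negbTE va) orbF => /eqP.
Qed.

Lemma gnp_prob_witnesses :
  gnp_prob p (fun E => (witness_edges J \subset E) && [disjoint witness_nonedges J & E]) =
  (1 - p) * (p * (1 - p)) ^+ #|J|.
Proof.
rewrite gnp_prob_pattern ?witness_edges_pairs ?witness_nonedges_pairs
  ?disjoint_witness_edges_nonedges ?card_witness_edges ?card_witness_nonedges //.
by rewrite exprS exprMn mulrCA.
Qed.

End Witnesses.

Lemma nonadj_dominates_indicator (E : {set {set 'I_n}}) :
  ((~~ adj E a b && dominates E a b)%:R : R) =
  \sum_(J : {set 'I_n} | J \subset ~: [set a; b])
    (-1) ^+ #|J| * ((witness_edges J \subset E) && [disjoint witness_nonedges J & E])%:R.
Proof.
rewrite nonadj_dominatesE -mulnb natrM -prodr_natb.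
rewrite (eq_bigr (fun v => 1 - (([set v; b] \in E) && ([set v; a] \notin E))%:R)); last first.
  by move=> v _; case: ([set v; b] \in E); case: ([set v; a] \in E); rewrite ?subr0 ?subrr.
rewrite prodr1B_subsets big_distrr; apply: eq_bigr => J _.
by rewrite /= mulrCA prodr_natb -natrM mulnb witnessesE.
Qed.

Lemma gnp_prob_nonadj_dominates :
  gnp_prob p (fun E => ~~ adj E a b && dominates E a b) = (1 - p) * (1 - p * (1 - p)) ^+ (n - 2).
Proof.
rewrite gnp_probE.
under eq_bigr => E _ do rewrite nonadj_dominates_indicator big_distrr /=.
rewrite exchange_big /=.
under eq_bigr => J J_ab.
  under eq_bigr => E _ do rewrite mulrCA.
  rewrite -big_distrr /= -gnp_probE (gnp_prob_witnesses J_ab) mulrCA -prodr_const.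
  over.
rewrite -big_distrr /= -prodr1B_subsets prodr_const; congr (_ * _ ^+ _).
by rewrite -[in RHS](card_ord n) -(cardsC [set a; b]) cards2 ab addKn.
Qed.

End Domination.

Lemma gnp_prob_nonadj_dom_pair_le (R : realType) (n : nat) (p : R) : 0 <= p <= 1 ->
  gnp_prob p (@has_nonadj_dom_pair n) <= n%:R ^+ 2 * ((1 - p) * (1 - p * (1 - p)) ^+ (n - 2)).
Proof.
move=> p01; set B := (1 - p) * _.
have B_ge0 : 0 <= B.
  by case/andP: p01 => p0 p1; rewrite mulr_ge0 ?exprn_ge0 ?subr_ge0 // mulr_ile1 ?subr_ge0 ?lerBlDr ?lerDl.
apply: (le_trans (gnp_prob_exists_le p01 _)).
apply: (@le_trans _ _ (\sum_(a : 'I_n) \sum_(b : 'I_n) B)); last first.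
  by rewrite !sumr_const card_ord -mulrnA expr2 -natrM mulr_natl.
apply: ler_sum => a _; apply: (le_trans (gnp_prob_exists_le p01 _)); apply: ler_sum => b _.
have [<- | ab] := eqVneq a b; last by rewrite /= gnp_prob_nonadj_dominates.
by rewrite /gnp_prob big_pred0 // => E; rewrite andbF.
Qed.

Section Estimates.
Variable R : realType.
Implicit Types (x y : R) (k : nat).

Lemma expr1B_le_expRN x k : 0 <= x <= 1 -> (1 - x) ^+ k <= expR (- (k%:R * x)).
Proof.
case/andP => x0 x1; rewrite -mulrN expRM_natl lerXn2r ?nnegrE ?subr_ge0 ?expR_ge0 //.
exact: expR_ge1Dx.
Qed.

Lemma mulr_expRN_le1 y : 0 <= y -> y * expR (- y) <= 1.
Proof.
move=> y0; rewrite expRN ler_pdivrMr ?expR_gt0 // mul1r.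
by apply: le_trans (expR_ge1Dx y); rewrite lerDr.
Qed.

Lemma mulr_expRN_decay x y c : 0 <= x -> 0 <= y -> 0 < c ->
  (x + y) * expR (- (c * y)) <= x + c^-1.
Proof.
move=> x0 y0 c0; rewrite mulrDl lerD //.
  by rewrite ler_piMr // expR_le1 oppr_le0 mulr_ge0 // ltW.
rewrite -(ler_pM2l c0) mulrV ?unitf_gt0 // mulrA.
exact/mulr_expRN_le1/mulr_ge0/y0/ltW.
Qed.

(* With [x = u / m]: [(m - 2) x (1 - x) = u (1 - x) - 2 x (1 - x) >= u - (u + 2) x]. *)
Lemma mulr_ratio1B_ge (m u : R) : 0 < m -> 0 <= u -> u ^+ 2 + 2 * u <= m ->
  u - 1 <= (m - 2) * (u / m * (1 - u / m)).
Proof.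
move=> m0 u0 hm; set x := u / m.
have xm : x * m = u by rewrite mulfVK ?gt_eqF.
have x0 : 0 <= x by rewrite divr_ge0 // ltW.
have x_small : u * x + 2 * x <= 1.
  rewrite -(ler_pM2r m0) mul1r.
  have -> : (u * x + 2 * x) * m = u * (x * m) + 2 * (x * m) by ring.
  by rewrite xm; nra.
have -> : (m - 2) * (x * (1 - x)) = (x * m) * (1 - x) - 2 * x * (1 - x) by ring.
by rewrite xm; nra.
Qed.

Lemma union_bound_sparse_le (m L t p : R) k :
  m = expR L -> k%:R = m - 2 -> 1 <= L -> 24 * L ^+ 2 <= m -> 0 <= t <= L ->
  2 * (L + t) <= m * p -> p <= 1 / 2 ->
  m ^+ 2 * ((1 - p) * (1 - p * (1 - p)) ^+ k) <= expR (1 - 2 * t).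
Proof.
move=> mE kE L1 hm /andP [t0 tL] hp p_half.
have m0 : 0 < m by rewrite mE expR_gt0.
have ratio_le : 2 * (L + t) / m <= p by rewrite ler_pdivrMr // [p * _]mulrC.
have ratio_ge0 : 0 <= 2 * (L + t) / m by rewrite divr_ge0 ?ltW //; lra.
have p0 : 0 <= p := le_trans ratio_ge0 ratio_le.
have expo : 2 * (L + t) - 1 <= k%:R * (p * (1 - p)).
  apply: (le_trans (mulr_ratio1B_ge m0 _ _)); [lra | nra | rewrite kE ler_wpM2l //; nra].
apply: (@le_trans _ _ (m ^+ 2 * (1 - p * (1 - p)) ^+ k)).
  by apply/ler_wpM2l/ler_piMl; [exact/exprn_ge0/ltW | apply: exprn_ge0; nra | lra].
apply: (@le_trans _ _ (m ^+ 2 * expR (- (k%:R * (p * (1 - p)))))).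
  by apply/ler_wpM2l/expr1B_le_expRN; [exact/exprn_ge0/ltW | nra].
rewrite mE -expRM_natl -expRD ler_expR; lra.
Qed.

Lemma union_bound_dense_le (m L lL t q : R) k :
  m = expR L -> L = expR lL -> k%:R = m - 2 -> 1 <= L -> 32 * L ^+ 2 <= m ->
  0 <= t <= lL -> lL <= L -> L + lL + t <= m * q -> q <= 1 / 2 ->
  m ^+ 2 * (q * (1 - q * (1 - q)) ^+ k) <= 11 * expR (1 - t).
Proof.
(* Write q = Q + d with Q = u / m: the surplus d adds c d to the exponent, which
   absorbs the factor m q, leaving m (Q + 1/c) <= u + 8 <= 11 L. *)
move=> mE LE kE L1 hm /andP [t0 tlL] lLL hq q_half.
have m0 : 0 < m by rewrite mE expR_gt0.
set u := L + lL + t in hq *; have uE : u = L + lL + t by [].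
set Q := u / m; have QE : Q * m = u by rewrite mulfVK ?gt_eqF.
have Q0 : 0 <= Q by rewrite divr_ge0 ?ltW //; lra.
have Q_le : Q <= q by rewrite ler_pdivrMr // [q * _]mulrC.
have Q_quarter : Q <= 1 / 4 by rewrite ler_pdivrMr //; nra.
set d := q - Q; have dE : d = q - Q by [].
set c := (m - 2) / 4; have c0 : 0 < c by rewrite divr_gt0 //; nra.
have expo : u - 1 + c * d <= k%:R * (q * (1 - q)).
  have gap : Q * (1 - Q) + d / 4 <= q * (1 - q).
    by have := mulr_ge0 (_ : 0 <= d) (_ : 0 <= 3 / 4 - q - Q); nra.
  apply: (le_trans _ (ler_wpM2l _ gap)); last by rewrite kE; nra.
  have := mulr_ratio1B_ge m0 (_ : 0 <= u) (_ : u ^+ 2 + 2 * u <= m).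
  by rewrite -/Q mulrDr kE /c; nra.
have decay : q * expR (- (c * d)) <= Q + c^-1.
  have -> : q = Q + d by rewrite dE addrC subrK.
  by apply: mulr_expRN_decay => //; lra.
have mc : m * c^-1 <= 8.
  by rewrite /c invf_div mulrA ler_pdivrMr; nra.
have q0 : 0 <= q by lra.
have e0 : 0 <= m * expR (1 - u) by rewrite mulr_ge0 ?expR_ge0 ?ltW.
apply: (@le_trans _ _ (m ^+ 2 * (q * expR (- (k%:R * (q * (1 - q))))))).
  apply: ler_wpM2l; first exact/exprn_ge0/ltW.
  by apply/ler_wpM2l/expr1B_le_expRN => //; nra.
apply: (@le_trans _ _ (m ^+ 2 * (q * expR (1 - u - c * d)))).
  apply: ler_wpM2l; first exact/exprn_ge0/ltW.
  by apply: ler_wpM2l => //; rewrite ler_expR; lra.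
have -> : m ^+ 2 * (q * expR (1 - u - c * d)) =
          m * expR (1 - u) * (m * (q * expR (- (c * d)))) by rewrite expRD; ring.
apply: (le_trans (ler_wpM2l e0 (ler_wpM2l (ltW m0) decay))).
apply: (@le_trans _ _ (m * expR (1 - u) * (11 * L))).
  by apply: ler_wpM2l => //; rewrite mulrDr mulrC QE; lra.
have -> : m * expR (1 - u) * (11 * L) = 11 * (expR L * expR lL * expR (1 - u)) by rewrite -mE -LE; ring.
by rewrite -!expRD; apply: ler_wpM2l; rewrite ?ler_expR; lra.
Qed.

Lemma union_bound_le_expR (n : nat) (p t : R) :
  expR 192 <= n%:R :> R -> 0 <= t <= ln (ln n%:R) ->
  2 * (ln n%:R + t) <= n%:R * p -> ln n%:R + ln (ln n%:R) + t <= n%:R * (1 - p) ->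
  n%:R ^+ 2 * ((1 - p) * (1 - p * (1 - p)) ^+ (n - 2)) <= 11 * expR (1 - t).
Proof.
move=> n_ge /andP [t0 t_le] hp hq.
set m := n%:R in n_ge hp hq *; set L := ln m in t_le hp hq *; set lL := ln L in t_le hq *.
have m0 : 0 < m := lt_le_trans (expR_gt0 _) n_ge.
have mE : m = expR L by rewrite lnK.
have L_ge : 192 <= L by rewrite -ler_expR -mE.
have LE : L = expR lL by rewrite lnK // posrE; lra.
have lLL : lL <= L by apply/ltW/ln_sublinear; lra.
(* [e^L >= L^3 / 3!], and [L^3 / 6 >= 32 L^2] once [L >= 192]. *)
have hm : 32 * L ^+ 2 <= m.
  have := @expR_ge1Dxn R L 2 (ltW (lt_le_trans _ L_ge)); rewrite -mE.
  by rewrite (_ : 3`!%:R = 6 :> R) //; nra.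
have kE : (n - 2)%:R = m - 2 by rewrite natrB // -(ler_nat R) -/m; nra.
case: (lerP p (1 / 2)) => [p_half | p_half].
  apply: (le_trans (union_bound_sparse_le mE kE _ _ _ hp p_half)); rewrite ?t0 /=; try nra.
  apply: (@le_trans _ _ (expR (1 - t))); first by rewrite ler_expR; lra.
  by apply: ler_peMl; [exact: expR_ge0 | lra].
rewrite (_ : p * (1 - p) = (1 - p) * (1 - (1 - p))); last by ring.
by apply: (union_bound_dense_le mE LE kE); rewrite ?t0 ?t_le //; lra.
Qed.

End Estimates.

Local Open Scope classical_set_scope.
Local Open Scope ring_scope.

Section Limits.
Variable R : realType.

Lemma cvgy_min (T : Type) (F : set_system T) {FF : Filter F} (f g : T -> R) :
  f @ F --> +oo -> g @ F --> +oo -> (fun x => Num.min (f x) (g x)) @ F --> +oo.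
Proof.
move=> /cvgryPge f_oo /cvgryPge g_oo; apply/cvgryPge => A.
by near=> x; rewrite le_min; apply/andP; split; near: x; [apply: f_oo | apply: g_oo].
Unshelve. all: by end_near.
Qed.

Lemma ln_ln_cvgy : (fun n : nat => ln (ln n%:R) : R) @ \oo --> +oo.
Proof.
apply/cvgryPge => A; near=> n.
have n_ge : expR (expR A) <= n%:R by near: n; apply: nbhs_infty_ger.
have lnn_ge : expR A <= ln n%:R by rewrite -ler_expR lnK // posrE (lt_le_trans (expR_gt0 _) n_ge).
by rewrite -ler_expR lnK // posrE (lt_le_trans (expR_gt0 _) lnn_ge).
Unshelve. all: by end_near.
Qed.

Lemma expR_1B_cvg0 (T : Type) (F : set_system T) {FF : Filter F} (u : T -> R) :
  u @ F --> +oo -> (fun x => expR (1 - u x)) @ F --> 0.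
Proof.
move=> u_oo.
have e_cvg : expR (- u x) @[x --> F] --> 0 := cvg_comp _ _ u_oo (@cvgr_expR R).
have -> : (fun x => expR (1 - u x)) = (fun x => expR 1 * expR (- u x)).
  by apply/funext => x; rewrite expRD.
by rewrite -(mulr0 (expR 1)); apply: cvgMl_tmp.
Qed.

End Limits.

Lemma gnp_prob_nonadj_dom_pair_le_expR (R : realType) (n : nat) (p w t : R) :
  expR 192 <= n%:R :> R -> 0 <= t -> t <= w -> t <= ln (ln n%:R) ->
  2 * ((ln n%:R + w) / n%:R) <= p -> p <= 1 - (ln n%:R + ln (ln n%:R) + w) / n%:R ->
  0 <= gnp_prob p (@has_nonadj_dom_pair n) <= 11 * expR (1 - t).
Proof.
move=> n_ge t0 tw t_le p_lo p_hi.
have n0 : 0 < n%:R :> R := lt_le_trans (expR_gt0 _) n_ge.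
have L0 : 0 <= ln n%:R :> R by apply: ln_ge0; have := expR_ge1Dx (192 : R); lra.
have n_div : forall x : R, n%:R * (x / n%:R) = x by move=> x; rewrite mulrCA divff ?mulr1 ?gt_eqF.
have hp : 2 * (ln n%:R + t) <= n%:R * p.
  by have := ler_wpM2l (ltW n0) p_lo; rewrite mulrCA n_div; lra.
have hq : ln n%:R + ln (ln n%:R) + t <= n%:R * (1 - p).
  by have := ler_wpM2l (ltW n0) p_hi; rewrite mulrBr mulr1 n_div; lra.
have p01 : 0 <= p <= 1 by apply/andP; split; nra.
rewrite gnp_prob_ge0 //=; apply: le_trans (gnp_prob_nonadj_dom_pair_le n p01) _.
by apply: union_bound_le_expR; rewrite ?t0 ?t_le.
Qed.

Theorem proposition2p10 (R : realType) (omega p : nat -> R) :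
  omega @ \oo --> +oo ->
  (\forall n \near \oo,
     2 * ((ln (n%:R) + omega n) / n%:R) <= p n /\
     p n <= 1 - (ln (n%:R) + ln (ln (n%:R)) + omega n) / n%:R) ->
  (fun n => gnp_prob (p n) (@has_nonadj_dom_pair n)) @ \oo --> 0.
Proof.
move=> omega_oo p_bounds.
pose t n := Num.min (omega n) (ln (ln n%:R)).
have t_oo : t @ \oo --> +oo by apply: cvgy_min => //; exact: ln_ln_cvgy.
apply: (squeeze_cvgr (f := fun=> 0) (h := fun n => 11 * expR (1 - t n))); last 2 first.
- exact: cvg_cst.
- by rewrite -(mulr0 11); apply: cvgMl_tmp; apply: expR_1B_cvg0; exact: t_oo.
near=> n; have /(_ _) [// | p_lo p_hi] := near p_bounds n.
apply: (gnp_prob_nonadj_dom_pair_le_expR _ _ _ _ p_lo p_hi); rewrite ?ge_min ?lexx ?orbT //.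
- by near: n; apply: nbhs_infty_ger.
- by near: n; exact: (cvgryPge t).1 t_oo 0.
Unshelve. all: by end_near.
Qed.
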